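(* If the bivariate random vector $(X,Y)$ is exchangeable, i.e. $(X,Y)\overset{d}{=}(Y,X)$, then $$|\max(X,-Y)|\overset{d}{=}|\min(X,-Y)|\overset{d}{=}|X|\overset{d}{=}|Y|.$$
   Context: $\overset{d}{=}$ denotes equality in distribution. *)

From HB Require Import structures.
From mathcomp Require Import all_boot all_order all_algebra.
From mathcomp Require Import all_classical all_reals all_analysis.
Set Implicit Arguments. Unset Strict Implicit. Unset Printing Implicit Defensive.
Import Order.TTheory GRing.Theory Num.Theory.
Local Open Scope classical_set_scope.
Local Open Scope ring_scope.

Definition eq_dist d d' (T : measurableType d) (U : measurableType d')
  (R : realType) (P : probability T R) (f g : T -> U) : Prop :=
  forall A : set U, measurable A -> P (f @^-1` A) = P (g @^-1` A).

From HB Require Import structures.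
From mathcomp Require Import all_boot all_order all_algebra.
From mathcomp Require Import all_classical all_reals all_analysis.
From mathcomp Require Import measurable_realfun lra.
Set Implicit Arguments.
Unset Strict Implicit.
Unset Printing Implicit Defensive.

Import Order.TTheory GRing.Theory Num.Theory.
Local Open Scope classical_set_scope.
Local Open Scope ring_scope.

(* Writing M := |max(X,-Y)| and m := |min(X,-Y)|, exchangeability gives
   M =d m (since |max(Y,-X)| = |min(X,-Y)|) and |X| =d |Y|.  Pointwise the
   unordered pairs {m, M} and {|X|, |Y|} coincide, so for every measurable A
   the events {m in A}, {M in A} have the same intersection and union as
   {|X| in A}, {|Y| in A}; inclusion-exclusion then forces
   2 P(m in A) = P(m in A) + P(M in A) = P(|X| in A) + P(|Y| in A)
   = 2 P(|X| in A). *)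

Lemma measurable_preimageT d d' (T : measurableType d) (U : measurableType d')
    (f : T -> U) (A : set U) :
  measurable_fun setT f -> measurable A -> measurable (f @^-1` A).
Proof. by move=> mf mA; rewrite -[f @^-1` A]setTI; exact: mf. Qed.

Lemma measureIU d (T : measurableType d) (R : realType) (P : probability T R)
    (E F : set T) : measurable E -> measurable F ->
  (P E + P F = P (E `&` F) + P (E `|` F))%E.
Proof.
move=> mE mF; rewrite measureUfinl ?ltey_eq ?fin_num_measure//.
by rewrite [RHS]addeC subeK// fin_num_measure//; exact: measurableI.
Qed.

Lemma fin_num_double_inj (R : realDomainType) (x y : \bar R) :
  x \is a fin_num -> y \is a fin_num -> (x + x = y + y)%E -> x = y.
Proof. by move=> /fineK <- /fineK <-; rewrite -!EFinD => -[h]; congr _%:E; lra. Qed.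

Section EqDist.
Context d d' (T : measurableType d) (U : measurableType d') (R : realType).
Variable P : probability T R.

Lemma eq_dist_sym (f g : T -> U) : eq_dist P f g -> eq_dist P g f.
Proof. by move=> fg A mA; rewrite fg. Qed.

Lemma eq_dist_comp d'' (V : measurableType d'') (h : U -> V) (f g : T -> U) :
  measurable_fun setT h -> eq_dist P f g -> eq_dist P (h \o f) (h \o g).
Proof. by move=> mh fg A mA; exact: (fg _ (measurable_preimageT mh mA)). Qed.

Lemma eq_dist_swapped_pairs (f1 f2 g1 g2 : T -> U) :
  measurable_fun setT f1 -> measurable_fun setT f2 ->
  measurable_fun setT g1 -> measurable_fun setT g2 ->
  (forall w, (f1 w = g1 w /\ f2 w = g2 w) \/ (f1 w = g2 w /\ f2 w = g1 w)) ->
  eq_dist P f1 f2 -> eq_dist P g1 g2 -> eq_dist P f1 g1.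
Proof.
move=> mf1 mf2 mg1 mg2 fg f12 g12 A mA.
have mF1 := measurable_preimageT mf1 mA; have mF2 := measurable_preimageT mf2 mA.
have mG1 := measurable_preimageT mg1 mA; have mG2 := measurable_preimageT mg2 mA.
have eqI : f1 @^-1` A `&` f2 @^-1` A = g1 @^-1` A `&` g2 @^-1` A.
  by apply/seteqP; split=> w /=; case: (fg w) => -[-> ->] [].
have eqU : f1 @^-1` A `|` f2 @^-1` A = g1 @^-1` A `|` g2 @^-1` A.
  by apply/seteqP; split=> w /=; case: (fg w) => -[-> ->] [] ?; by [left|right].
apply: fin_num_double_inj; rewrite ?fin_num_measure//.
rewrite [X in _ + X = _](f12 A mA) [X in _ = _ + X](g12 A mA).
by rewrite (measureIU P mF1 mF2) (measureIU P mG1 mG2) eqI eqU.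
Qed.

End EqDist.

Lemma norm_max_oppr (R : realDomainType) (x y : R) :
  `|Num.max y (- x)| = `|Num.min x (- y)|.
Proof. by rewrite -normrN oppr_max opprK minC. Qed.

Lemma norm_min_max_oppr (R : realDomainType) (x y : R) :
  (`|Num.min x (- y)| = `|x| /\ `|Num.max x (- y)| = `|y|) \/
  (`|Num.min x (- y)| = `|y| /\ `|Num.max x (- y)| = `|x|).
Proof. by case: leP => _; [left|right]; rewrite normrN. Qed.

Theorem corollary2p13 (d : measure_display) (T : measurableType d)
  (R : realType) (P : probability T R) (X Y : {RV P >-> R}) :
  eq_dist P (fun w => (X w, Y w)) (fun w => (Y w, X w)) ->
  eq_dist P (fun w => `|Num.max (X w) (- Y w)|) (fun w => `|Num.min (X w) (- Y w)|) /\
  eq_dist P (fun w => `|Num.min (X w) (- Y w)|) (fun w => `|X w|) /\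
  eq_dist P (fun w => `|X w|) (fun w => `|Y w|).
Proof.
move=> exchXY.
have max_min : eq_dist P (fun w => `|Num.max (X w) (- Y w)|)
                         (fun w => `|Num.min (X w) (- Y w)|).
  have mh : measurable_fun setT (fun p : R * R => `|Num.max p.1 (- p.2)|).
    apply: measurableT_comp => //; apply: measurable_maxr.
      exact: measurable_fst.
    exact: measurable_funN measurable_snd.
  move=> A mA; rewrite (eq_dist_comp mh exchXY mA); congr (P _).
  by apply/funext => w; rewrite /preimage /= norm_max_oppr.
have normXY : eq_dist P (fun w => `|X w|) (fun w => `|Y w|).
  have mh : measurable_fun setT (fun p : R * R => `|p.1|).
    by apply: measurableT_comp => //; exact: measurable_fst.
  exact: eq_dist_comp mh exchXY.
have mmin : measurable_fun setT (fun w => `|Num.min (X w) (- Y w)|).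
  exact/measurableT_comp/measurable_minr/measurable_funN.
have mmax : measurable_fun setT (fun w => `|Num.max (X w) (- Y w)|).
  exact/measurableT_comp/measurable_maxr/measurable_funN.
have mnX : measurable_fun setT (fun w => `|X w|) by exact: measurableT_comp.
have mnY : measurable_fun setT (fun w => `|Y w|) by exact: measurableT_comp.
split; [exact: max_min | split; last exact: normXY].
exact: eq_dist_swapped_pairs mmin mmax mnX mnY
  (fun w => norm_min_max_oppr (X w) (Y w)) (eq_dist_sym max_min) normXY.
Qed.
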